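(* Let $c\ge2$, let $\Gamma=(V,E)$ be a $c$-uniform unoriented hypergraph with no isolated vertices, let $k\ge2$ and let $V_1,\dots,V_k$ be a partition of $V$. Assume there is an integer $m\ge1$ such that $|e\cap V_i|\in\{0,m\}$ for every $e\in E$ and every $i=1,\dots,k$. Then the functions $g_{ij}$ (for all distinct $i,j\in\{1,\dots,k\}$) are all eigenfunctions of the normalized Laplacian $L$ if and only if for all $i=1,\dots,k$ and all $v\in V$, \[ \bigl|\{e\in E: v\in e,\ e\cap V_i\neq\varnothing\}\bigr|=\begin{cases}\dfrac{(c/m-1)\deg v}{k-1}, & v\notin V_i,\\[2mm] \deg v, & v\in V_i.\end{cases} \] In this case the corresponding eigenvalue is $\dfrac{mk-c}{k-1}$.
   Context: A hypergraph has finite vertex set $V$ and edge set $E\subseteq\mathcal P(V)$; it is $c$-uniform if $|e|=c$ for all $e$, and unoriented means all incidences have orientation $+1$. $\deg v=|\{e\in E: v\in e\}|\ge1$, $D=\mathrm{diag}(\deg v)$, adjacency $A_{v,v}=0$ and $A_{v,w}=-|\{e\in E: v,w\in e\}|$ for $v\ne w$, normalized Laplacian $L=\mathrm{Id}-D^{-1}A$. Given a partition $V_1,\dots,V_k$ of $V$ and distinct $i,j$, the function $g_{ij}\colon V\to\mathbb R$ is defined by $g_{ij}(w)=1$ if $w\in V_i$, $g_{ij}(w)=-1$ if $w\in V_j$, and $g_{ij}(w)=0$ otherwise. *)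

From HB Require Import structures.
From mathcomp Require Import all_boot all_order all_algebra.
Set Implicit Arguments. Unset Strict Implicit. Unset Printing Implicit Defensive.
Import Order.TTheory GRing.Theory Num.Theory.
Local Open Scope ring_scope.

Section Hyper.
Variables (R : realFieldType) (V : finType) (E : {set {set V}}).

Definition hdeg (v : V) : nat := #|[set e in E | v \in e]|.

Definition hadj (v w : V) : R :=
  if v == w then 0 else - (#|[set e in E | (v \in e) && (w \in e)]|)%:R.

Definition hlap (v w : V) : R :=
  (v == w)%:R - ((hdeg v)%:R)^-1 * hadj v w.

Definition hlap_apply (f : V -> R) (v : V) : R := \sum_(w : V) hlap v w * f w.

Definition is_eigenfun_with (f : V -> R) (lam : R) : Prop :=
  (exists v, f v != 0) /\ forall v, hlap_apply f v = lam * f v.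

Definition is_eigenfun (f : V -> R) : Prop := exists lam, is_eigenfun_with f lam.

End Hyper.

(* A partition V_1..V_k of V given by a block map p : V -> 'I_k;
   V_i = block p i. *)
Definition block (V : finType) (k : nat) (p : V -> 'I_k) (i : 'I_k) : {set V} :=
  [set v | p v == i].

Definition gfun (R : realFieldType) (V : finType) (k : nat) (p : V -> 'I_k)
  (i j : 'I_k) (w : V) : R :=
  if w \in block p i then 1 else if w \in block p j then -1 else 0.

(* Unfolding the normalized Laplacian, (L f)(v) is the average, over the edges e
   at v, of the sum of f over e.  For f = g_ij an edge at v contributes
   |e ∩ V_i| - |e ∩ V_j|, which is m times the difference of the indicators of
   "e meets V_i" and "e meets V_j"; hence (L g_ij)(v) = m (N_i(v) - N_j(v)) / deg v,
   where N_i(v) counts the edges at v meeting V_i.  Outside V_i ∪ V_j the function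
   g_ij vanishes, so if g_ij is an eigenfunction then N_i(v) = N_j(v) there: all
   N_i(v) with v ∉ V_i coincide.  Counting the c deg v incidences at v block by
   block, with N_i(v) = deg v for v ∈ V_i, gives their common value
   (c/m - 1) deg v / (k - 1).  Conversely, with these values the formula for
   L g_ij yields the eigenvalue (mk - c)/(k - 1). *)

From HB Require Import structures.
From mathcomp Require Import all_boot all_order all_algebra.
From mathcomp Require Import ring.
Set Implicit Arguments. Unset Strict Implicit. Unset Printing Implicit Defensive.
Import Order.TTheory GRing.Theory Num.Theory.
Local Open Scope ring_scope.

Lemma natr_cardI (R : pzSemiRingType) (T : finType) (A B : {set T}) :
  (#|A :&: B|)%:R = \sum_(x in A) ((x \in B)%:R : R).
Proof.
rewrite -sum1_card natr_sum (eq_bigl (fun x => (x \in A) && (x \in B))).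
  by rewrite big_mkcondr /=; apply: eq_bigr => x _; case: (x \in B).
by move=> x; rewrite inE.
Qed.

Section Hypergraph.
Variables (R : realFieldType) (V : finType) (E : {set {set V}}).

Definition meet_count (B : {set V}) (v : V) : nat :=
  #|[set e in E | (v \in e) && (e :&: B != set0)]|.

Lemma hlapE v w : (0 < hdeg E v)%N ->
  hlap R E v w =
  (\sum_(e in [set e in E | v \in e]) ((w \in e)%:R : R)) / (hdeg E v)%:R.
Proof.
move=> deg_gt0.
rewrite (eq_bigr (fun e => (e \in [set e : {set V} | w \in e])%:R)); last first.
  by move=> e _; rewrite inE.
rewrite -natr_cardI /hlap /hadj; case: eqP => [<-|/eqP neq_vw].
  have -> : [set e in E | v \in e] :&: [set e : {set V} | v \in e] =
            [set e in E | v \in e].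
    by apply/setP => e; rewrite !inE -andbA andbb.
  by rewrite mulr0 subr0 divff // pnatr_eq0 -lt0n.
have -> : [set e in E | v \in e] :&: [set e : {set V} | w \in e] =
          [set e in E | (v \in e) && (w \in e)].
  by apply/setP => e; rewrite !inE -andbA.
by rewrite sub0r mulrN opprK mulrC.
Qed.

Lemma hlap_applyE (f : V -> R) v : (0 < hdeg E v)%N ->
  hlap_apply E f v =
  (\sum_(e in [set e in E | v \in e]) \sum_(w in e) f w) / (hdeg E v)%:R.
Proof.
move=> deg_gt0; rewrite /hlap_apply.
under eq_bigr do rewrite hlapE // mulrAC mulr_suml.
rewrite -mulr_suml exchange_big /=; congr (_ / _); apply: eq_bigr => e _.
rewrite [RHS]big_mkcond /=; apply: eq_bigr => w _.
by case: (w \in e); rewrite ?mul1r ?mul0r.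
Qed.

Lemma meet_count_mem (B : {set V}) v : v \in B -> meet_count B v = hdeg E v.
Proof.
move=> vB; apply: eq_card => e; rewrite !inE.
case: (e \in E) => //=; case ve: (v \in e) => //=.
by apply/set0Pn; exists v; rewrite inE ve.
Qed.

Lemma sum_cardI_regular (m : nat) (B : {set V}) v :
  (forall e, e \in E -> #|e :&: B| = 0%N \/ #|e :&: B| = m) ->
  (\sum_(e in [set e in E | v \in e]) #|e :&: B| = m * meet_count B v)%N.
Proof.
move=> regB; rewrite /meet_count -sum1_card big_distrr /= muln1 big_mkcond /=.
rewrite [RHS]big_mkcond /=; apply: eq_bigr => e _; rewrite !inE.
case: (boolP (e \in E)) => //= eE; case: (v \in e) => //=.
by rewrite -card_gt0; case: (regB e eE) => ->; case: m {regB}.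
Qed.

Section Partition.
Variables (k : nat) (p : V -> 'I_k).

Lemma sum_cardI_block (e : {set V}) : (\sum_i #|e :&: block p i| = #|e|)%N.
Proof.
rewrite -sum1_card (partition_big p predT) //=; apply: eq_bigr => i _.
by rewrite -sum1_card; apply: eq_bigl => w; rewrite !inE andbC.
Qed.

Lemma sum_gfun i j (e : {set V}) : i != j ->
  \sum_(w in e) gfun R p i j w =
  (#|e :&: block p i|)%:R - (#|e :&: block p j|)%:R.
Proof.
move=> neq_ij; rewrite !natr_cardI -sumrB; apply: eq_bigr => w _.
rewrite /gfun !inE; case: (eqVneq (p w) i) => [->|_].
  by rewrite (negbTE neq_ij) subr0.
by case: (p w == j); rewrite /= ?mulr0n ?mulr1n ?sub0r ?subr0 ?oppr0.
Qed.

Variables (c m : nat).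
Hypothesis uniform : forall e, e \in E -> #|e| = c.
Hypothesis meet_regular :
  forall i e, e \in E -> #|e :&: block p i| = 0%N \/ #|e :&: block p i| = m.
Hypothesis deg_gt0 : forall v, (0 < hdeg E v)%N.
Hypothesis m_gt0 : (0 < m)%N.

Let natr_hdeg_neq0 v : (hdeg E v)%:R != 0 :> R.
Proof. by rewrite pnatr_eq0 -lt0n. Qed.

Let natr_m_neq0 : m%:R != 0 :> R.
Proof. by rewrite pnatr_eq0 -lt0n. Qed.

Lemma hlap_gfun i j v : i != j ->
  hlap_apply E (gfun R p i j) v =
  m%:R * ((meet_count (block p i) v)%:R - (meet_count (block p j) v)%:R)
  / (hdeg E v)%:R.
Proof.
move=> neq_ij; rewrite hlap_applyE //; under eq_bigr do rewrite sum_gfun //.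
rewrite sumrB -!natr_sum !(sum_cardI_regular _ (meet_regular _)).
by rewrite !natrM -mulrBr.
Qed.

(* Counting incidences (e, w) with v, w in e by the block of w. *)
Lemma sum_meet_count v :
  (\sum_i m * meet_count (block p i) v = c * hdeg E v)%N.
Proof.
under eq_bigr do rewrite -(sum_cardI_regular _ (meet_regular _)).
rewrite exchange_big /= (eq_bigr (fun => c)); last first.
  by move=> e; rewrite inE => /andP [eE _]; rewrite sum_cardI_block uniform.
by rewrite sum_nat_const mulnC.
Qed.

Lemma meet_count_eq_of_eigenfun i j v :
  i != j -> is_eigenfun E (gfun R p i j) ->
  v \notin block p i -> v \notin block p j ->
  meet_count (block p i) v = meet_count (block p j) v.
Proof.
move=> neq_ij [lam [_ eigen]] vNi vNj; move: (eigen v).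
rewrite hlap_gfun // /gfun (negbTE vNi) (negbTE vNj) mulr0 => /eqP.
rewrite !mulf_eq0 invr_eq0 (negbTE (natr_hdeg_neq0 v)) (negbTE natr_m_neq0) orbF /=.
by rewrite subr_eq0 eqr_nat => /eqP.
Qed.

Hypothesis k_gt1 : (1 < k)%N.

Let natr_predk_neq0 : (k.-1)%:R != 0 :> R.
Proof. by rewrite pnatr_eq0 -lt0n -ltnS prednK // ltnW. Qed.

Lemma meet_count_offblock v n :
  (forall j, j != p v -> meet_count (block p j) v = n) ->
  n%:R = ((c%:R / m%:R - 1) * (hdeg E v)%:R) / (k.-1)%:R :> R.
Proof.
move=> offblock; have := sum_meet_count v.
rewrite (bigD1 (p v)) //= meet_count_mem ?inE //.
rewrite (eq_bigr (fun => m * n)%N) => [|j /offblock -> //].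
rewrite sum_nat_const cardC1 card_ord => /(congr1 (fun x => x%:R : R)).
rewrite !natrD !natrM => counting.
rewrite -[c%:R](mulfK (natr_hdeg_neq0 v)) -counting; field.
by rewrite natr_hdeg_neq0 natr_m_neq0 natr_predk_neq0.
Qed.

Lemma meet_count_offblock_of_eigenfuns :
  (forall i j, i != j -> is_eigenfun E (gfun R p i j)) ->
  forall i v, v \notin block p i ->
  (meet_count (block p i) v)%:R =
  ((c%:R / m%:R - 1) * (hdeg E v)%:R) / (k.-1)%:R :> R.
Proof.
move=> eigen i v vNi; apply: meet_count_offblock => j neq_jv.
case: (eqVneq j i) => [-> // | neq_ji].
apply: meet_count_eq_of_eigenfun (eigen _ _ neq_ji) _ vNi => //.
by rewrite /block inE eq_sym.
Qed.

Hypothesis blocks_neq0 : forall i, block p i != set0.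

Lemma gfun_eigenfun_with :
  (forall i v, v \notin block p i ->
     (meet_count (block p i) v)%:R =
     ((c%:R / m%:R - 1) * (hdeg E v)%:R) / (k.-1)%:R :> R) ->
  forall i j, i != j ->
  is_eigenfun_with E (gfun R p i j) (((m * k)%:R - c%:R) / (k.-1)%:R).
Proof.
move=> offblock i j neq_ij; split.
  have /set0Pn [v vi] := blocks_neq0 i.
  by exists v; rewrite /gfun vi oner_eq0.
move=> v; rewrite hlap_gfun // /gfun.
have kE : k%:R = (k.-1)%:R + 1 :> R by rewrite natr1 prednK // ltnW.
rewrite natrM kE; case: (boolP (v \in block p i)) => [vi|vNi].
  have vNj : v \notin block p j by move: vi; rewrite /block !inE => /eqP ->.
  rewrite (meet_count_mem vi) offblock //; field.
  by rewrite natr_hdeg_neq0 natr_m_neq0 natr_predk_neq0.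
case: (boolP (v \in block p j)) => [vj|vNj].
  rewrite (meet_count_mem vj) offblock //; field.
  by rewrite natr_hdeg_neq0 natr_m_neq0 natr_predk_neq0.
by rewrite !offblock // subrr mulr0 mul0r mulr0.
Qed.

End Partition.

End Hypergraph.

Theorem mainTheorem7 (R : realFieldType) (V : finType) (E : {set {set V}})
  (c k m : nat) (p : V -> 'I_k) :
  (2 <= c)%N ->
  (forall e, e \in E -> #|e| = c) ->
  (forall v : V, (1 <= hdeg E v)%N) ->
  (2 <= k)%N ->
  (forall i : 'I_k, block p i != set0) ->
  (1 <= m)%N ->
  (forall e, e \in E -> forall i : 'I_k,
      #|e :&: block p i| = 0%N \/ #|e :&: block p i| = m) ->
  let cond :=
    forall (i : 'I_k) (v : V),
      (#|[set e in E | (v \in e) && (e :&: block p i != set0)]|)%:R =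
      (if v \in block p i then (hdeg E v)%:R
       else ((c%:R / m%:R - 1) * (hdeg E v)%:R) / (k.-1)%:R :> R) in
  ((forall i j : 'I_k, i != j -> is_eigenfun E (@gfun R V k p i j))
     <-> cond)
  /\ (cond -> forall i j : 'I_k, i != j ->
        is_eigenfun_with E (@gfun R V k p i j)
          (((m * k)%:R - c%:R) / (k.-1)%:R)).
Proof.
move=> _ uniform deg_gt0 k_gt1 blocks_neq0 m_gt0 meet_regular cond.
have {}meet_regular i e (eE : e \in E) := meet_regular e eE i.
have cond_offblock : cond <-> forall i v, v \notin block p i ->
    (meet_count E (block p i) v)%:R =
    ((c%:R / m%:R - 1) * (hdeg E v)%:R) / (k.-1)%:R :> R.
  split=> C i v; first by move=> vNi; have := C i v; rewrite (negbTE vNi).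
  by case: ifP => [vi | /negbT /C //]; rewrite -(meet_count_mem E vi).
rewrite cond_offblock; split; last exact: gfun_eigenfun_with.
split; first exact: meet_count_offblock_of_eigenfuns.
by move=> C i j neq_ij; eexists; apply: gfun_eigenfun_with C i j neq_ij.
Qed.
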